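(* Let $N\ge 1$ be an integer, let $\Gamma$ be the principled parametric grammar $\Gamma^{(N)}$ defined below, and let $w$ be the string defined below. If $P,Q$ are positive integers with $P\le Q$ and $PQ=N$, then $w\in L(\Gamma_{s_P})$.
   Context: Let $a=\lceil\log_2\sqrt N\rceil$ and $b=\lceil\log_2 N\rceil$. The grammar $\Gamma^{(N)}$ has nonterminals $\mathtt S$, $A_0,\dots,A_a$, $B_0,\dots,B_a$, $C_0,\dots,C_{b+1}$, $Z_0,\dots,Z_b$, terminals $c_0,\dots,c_b$, and start symbol $\mathtt S$. Its rules are string-rewriting productions $\alpha\to\beta$ (possibly with more than one symbol on the left). Fixed rules (present for every parameter setting): $\mathtt S\to A_a\mathtt S$; $\mathtt S\to\varepsilon$; $B_j\to B_{j-1}B_{j-1}$ for $1\le j\le a$; $B_0\to C_0$; and for each $k\in\{0,\dots,b\}$: $C_kC_k\to C_kZ_k$, $C_kZ_k\to C_{k+1}Z_k$, $C_{k+1}Z_k\to C_{k+1}$, and $C_k\to c_k$. Parametric groups (exactly one alternative is chosen from each): $(A_0\to B_0,\ A_0\to\varepsilon)$, and for each $j\in\{1,\dots,a\}$, $(A_j\to A_{j-1},\ A_j\to B_jA_{j-1})$. A parameter setting $s$ is a choice of one alternative from each parametric group; $\Gamma_s$ is the grammar whose rules are the fixed rules together with the chosen alternatives, and $L(\Gamma_s)$ is the set of terminal strings derivable from $\mathtt S$. To $s$ associate bits $p_0,\dots,p_a$: $p_0=1$ iff $A_0\to B_0$ is chosen, and for $j\ge1$, $p_j=1$ iff $A_j\to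 B_jA_{j-1}$ is chosen; put $P_s=\sum_{j=0}^a p_j2^j$. Conversely, for an integer $0\le P<2^{a+1}$, $s_P$ is the setting whose bits are the binary digits of $P$. The string $w$ is $c_{i_1}c_{i_2}\cdots c_{i_r}$, where $i_1<\dots<i_r$ are the positions (counting from $0$ at the least significant digit) of the digits equal to $1$ in the binary representation of $N$. *)

From mathcomp Require Import all_boot.
Set Implicit Arguments. Unset Strict Implicit. Unset Printing Implicit Defensive.

(* Symbols of the grammar Gamma^(N): start symbol S, nonterminals A_j, B_j,
   C_k, Z_k and terminals c_k (written T k). *)
Inductive sym : Type :=
  | S : sym
  | A : nat -> sym
  | B : nat -> sym
  | C : nat -> sym
  | Z : nat -> sym
  | T : nat -> sym.

(* a = ceil(log2 sqrt N) = least a with N <= 4^a ;  b = ceil(log2 N). *)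
Definition par_a (N : nat) : nat := up_log 4 N.
Definition par_b (N : nat) : nat := up_log 2 N.

(* A parameter setting is given by its bits p_0, ..., p_a:
   p_0 = true iff A_0 -> B_0 is chosen (else A_0 -> eps);
   p_j = true iff A_j -> B_j A_{j-1} is chosen (else A_j -> A_{j-1}), j >= 1. *)
Definition setting := nat -> bool.

Definition sP (P : nat) : setting := fun j => odd (P %/ 2 ^ j).

Inductive rule (N : nat) (p : setting) : seq sym -> seq sym -> Prop :=
  | r_S1 : rule N p [:: S] [:: A (par_a N); S]
  | r_S2 : rule N p [:: S] [::]
  | r_B j : 1 <= j <= par_a N -> rule N p [:: B j] [:: B j.-1; B j.-1]
  | r_B0 : rule N p [:: B 0] [:: C 0]
  | r_CC k : k <= par_b N -> rule N p [:: C k; C k] [:: C k; Z k]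
  | r_CZ k : k <= par_b N -> rule N p [:: C k; Z k] [:: C k.+1; Z k]
  | r_CZ' k : k <= par_b N -> rule N p [:: C k.+1; Z k] [:: C k.+1]
  | r_Ct k : k <= par_b N -> rule N p [:: C k] [:: T k]
  | r_A0on : p 0 -> rule N p [:: A 0] [:: B 0]
  | r_A0off : ~~ p 0 -> rule N p [:: A 0] [::]
  | r_Aon j : 1 <= j <= par_a N -> p j -> rule N p [:: A j] [:: B j; A j.-1]
  | r_Aoff j : 1 <= j <= par_a N -> ~~ p j -> rule N p [:: A j] [:: A j.-1].

Definition step (N : nat) (p : setting) (x y : seq sym) : Prop :=
  exists u v l r, rule N p l r /\ x = u ++ l ++ v /\ y = u ++ r ++ v.

Inductive derives (N : nat) (p : setting) : seq sym -> seq sym -> Prop :=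
  | der_refl x : derives N p x x
  | der_step x y z : step N p x y -> derives N p y z -> derives N p x z.

Definition is_terminal (N : nat) (s : sym) : bool :=
  if s is T k then k <= par_b N else false.

Definition in_lang (N : nat) (p : setting) (x : seq sym) : Prop :=
  derives N p [:: S] x /\ all (is_terminal N) x.

(* w = c_{i_1} ... c_{i_r}, i_1 < ... < i_r the positions of the 1-bits of N
   (N < 2^(b+1), so positions 0..b suffice). *)
Definition word (N : nat) : seq sym :=
  [seq T i | i <- iota 0 (par_b N).+1 & odd (N %/ 2 ^ i)].

From mathcomp Require Import all_boot.
From mathcomp Require Import zify.

(* Writing P in binary with bits p_0 .. p_a, the chosen rules
   give  B_j =>* C_0^(2^j)  and hence  A_j =>* C_0^(P mod 2^(j+1)); since
   P <= sqrt N <= 2^a, the top nonterminal A_a yields exactly C_0^P, so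
   S =>* (A_a)^Q =>* C_0^(QP) = C_0^N.  The fixed C/Z rules then act as a
   binary counter: C_k C_k =>* C_(k+1), so C_k^m rewrites to the terminals
   c_(k+i) for the 1-bits i of m; applied to C_0^N this produces w. *)

Section Derivations.
Variables (N : nat) (p : setting).

Lemma derives_trans x y z :
  derives N p x y -> derives N p y z -> derives N p x z.
Proof. by elim=> [//|x0 y0 z0 Hxy _ IH] Hz; apply: der_step Hxy (IH Hz). Qed.

Lemma derives_ctx u v x y :
  derives N p x y -> derives N p (u ++ x ++ v) (u ++ y ++ v).
Proof.
elim=> [x0|x0 y0 z0 [u0 [v0 [l [r [Hr [-> ->]]]]]] _ IH]; first exact: der_refl.
apply: der_step IH; exists (u ++ u0), (v0 ++ v), l, r.
by rewrite -!catA.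
Qed.

Lemma derives_cat x x' y y' :
  derives N p x x' -> derives N p y y' -> derives N p (x ++ y) (x' ++ y').
Proof.
move=> Hx Hy; apply: (@derives_trans _ (x' ++ y)).
  by have := @derives_ctx [::] y x x' Hx.
by have := @derives_ctx x' [::] y y' Hy; rewrite !cats0.
Qed.

Lemma rule_der l r : rule N p l r -> derives N p l r.
Proof.
move=> Hr; apply: der_step (der_refl _ _ _).
by exists [::], [::], l, r; rewrite !cats0.
Qed.

End Derivations.
Arguments derives_trans {N p x} y {z}.
Arguments derives_cat {N p x x' y y'}.
Arguments rule_der {N p l r}.

Lemma B_der N p j : j <= par_a N -> derives N p [:: B j] (nseq (2 ^ j) (C 0)).
Proof.
elim: j => [_|j IH Hj]; first exact/rule_der/r_B0.
apply: derives_trans (rule_der (r_B (j := j.+1) _ _)) _; first by rewrite Hj.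
rewrite expnS mul2n -addnn nseqD.
by apply: (derives_cat (x := [:: B j]) (y := [:: B j])); apply: IH; lia.
Qed.

Lemma mod_double P d : P %% (2 * d) = odd (P %/ d) * d + P %% d.
Proof.
have [->|d_gt0] := posnP d; first by rewrite muln0 !modn0.
have bit_j : (odd (P %/ d) : nat) = (P %% (2 * d)) %/ d by rewrite -modn2 modn_divl.
have low : (P %% (2 * d)) %% d = P %% d by rewrite modn_dvdm // dvdn_mull.
by rewrite {1}(divn_eq (P %% (2 * d)) d) bit_j low.
Qed.

Lemma A_der N P j : j <= par_a N ->
  derives N (sP P) [:: A j] (nseq (P %% 2 ^ j.+1) (C 0)).
Proof.
elim: j => [_|j IH Hj].
  rewrite modn2; have bit0 : sP P 0 = odd P by rewrite /sP divn1.
  case HP: (odd P).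
    by apply: derives_trans (rule_der (r_A0on _ _)) (rule_der (r_B0 _ _)); rewrite bit0.
  by apply/rule_der/r_A0off; rewrite bit0 HP.
have Hj' : 1 <= j.+1 <= par_a N by rewrite Hj.
have IHj : derives N (sP P) [:: A j] (nseq (P %% 2 ^ j.+1) (C 0)) by apply: IH; lia.
rewrite expnS mod_double.
case bit: (odd (P %/ 2 ^ j.+1)).
  apply: derives_trans (rule_der (r_Aon Hj' _)) _; first by rewrite /sP bit.
  by rewrite mul1n nseqD; apply: (derives_cat (x := [:: B j.+1])) IHj; apply: B_der.
apply: derives_trans (rule_der (r_Aoff Hj' _)) _; first by rewrite /sP bit.
by rewrite mul0n add0n.
Qed.

Lemma S_der N P n : P < 2 ^ (par_a N).+1 ->
  derives N (sP P) [:: S] (nseq (n * P) (C 0)).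
Proof.
move=> HP; elim: n => [|n IH]; first exact/rule_der/r_S2.
apply: derives_trans (rule_der (r_S1 _ _)) _.
rewrite mulSn nseqD; apply: (derives_cat (x := [:: A (par_a N)])) IH.
by have := @A_der N P (par_a N) (leqnn _); rewrite modn_small.
Qed.

(* Carrying: C_k^(2n) =>* C_(k+1)^n, via C_k C_k => C_k Z_k => C_(k+1) Z_k => C_(k+1). *)
Lemma carry_der N p k n : k <= par_b N ->
  derives N p (nseq n.*2 (C k)) (nseq n (C k.+1)).
Proof.
move=> Hk; elim: n => [|n IH]; first exact: der_refl.
rewrite doubleS; apply: (derives_cat (x := [:: C k; C k]) (x' := [:: C k.+1])) IH.
apply: derives_trans (rule_der (r_CC _ Hk)) _.
by apply: derives_trans (rule_der (r_CZ _ Hk)) (rule_der (r_CZ' _ Hk)).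
Qed.

Definition bits (k m n : nat) : seq sym :=
  [seq T (k + i) | i <- iota 0 n & odd (m %/ 2 ^ i)].

Lemma bitsS k m n :
  bits k m n.+1 = (if odd m then [:: T k] else [::]) ++ bits k.+1 (m %/ 2) n.
Proof.
have shift : [seq T (k + i) | i <- iota 1 n & odd (m %/ 2 ^ i)] = bits k.+1 (m %/ 2) n.
  rewrite /bits -[iota 1 n]/(iota (1 + 0) n) iotaDl filter_map -map_comp.
  rewrite (eq_filter (a2 := fun i => odd (m %/ 2 %/ 2 ^ i))); last first.
    by move=> i /=; rewrite expnS divnMA.
  by apply: eq_map => i; rewrite /= addnA addn1.
by rewrite /bits /= expn0 divn1; case: (odd m); rewrite /= ?addn0 shift.
Qed.

Lemma counter_der N p n : forall k m, m < 2 ^ n -> k + n <= (par_b N).+1 ->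
  derives N p (nseq m (C k)) (bits k m n).
Proof.
elim: n => [|n IH] k m Hm Hkn.
  by move: Hm; rewrite expn0 ltnS leqn0 => /eqP ->; apply: der_refl.
have Hk : k <= par_b N by lia.
rewrite bitsS {1}(divn_eq m 2) modn2 muln2 addnC nseqD.
apply: derives_cat.
  by case: (odd m); [apply/rule_der/r_Ct | apply: der_refl].
apply: derives_trans (@carry_der N p k (m %/ 2) Hk) _.
by apply: IH; [rewrite ltn_divLR // -expnSr | lia].
Qed.

(* Since P * P <= N <= 4^a, the number P fits in a+1 bits. *)
Lemma small_factor_bound N P : P * P <= N -> P < 2 ^ (par_a N).+1.
Proof.
move=> HPP; have Ha : N <= 4 ^ par_a N := up_logP _ _.
have E4 : 4 ^ par_a N = 2 ^ par_a N * 2 ^ par_a N by rewrite -expnMn.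
rewrite expnS; move: Ha; rewrite E4; set x := 2 ^ par_a N => Ha.
have : P <= x.
  by rewrite leqNgt; apply/negP => Hx; have := ltn_mul Hx Hx; lia.
lia.
Qed.

Lemma word_terminal N : all (is_terminal N) (word N).
Proof.
rewrite /word all_map; apply/allP => i.
by rewrite mem_filter mem_iota add0n => /andP [_ Hi] /=.
Qed.

Theorem mainTheorem5 (N P Q : nat) :
  1 <= N -> 0 < P -> 0 < Q -> P <= Q -> P * Q = N ->
  in_lang N (sP P) (word N).
Proof.
move=> _ _ _ HPQ HN; split; last exact: word_terminal.
have HP : P < 2 ^ (par_a N).+1.
  by apply: small_factor_bound; rewrite -HN leq_mul2l HPQ orbT.
have Hb : N < 2 ^ (par_b N).+1.
  by have := @up_logP 2 N isT; rewrite -/(par_b N) expnS; lia.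
have -> : word N = bits 0 N (par_b N).+1 by rewrite /bits; apply: eq_map.
apply: derives_trans (@S_der N P Q HP) _.
by rewrite mulnC HN; apply: counter_der.
Qed.
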